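(* For every lattice point $p\in\mathbb Z^n$: $p\in P_G^{-}(y_1,\dots,y_m)$ if and only if $p+e_1$ is a good point of $P_G(y_1,\dots,y_m)$.
   Context: Let $m,n$ be positive integers and $G\subseteq K_{m,n}$ a bipartite graph without isolated vertices, with left vertices $1,\dots,m$ and right vertices $\bar1,\dots,\bar n$. For $i\in[m]$ let $I_i\subseteq[n]$ be the set of $j$ with $(i,\bar j)$ an edge of $G$. For $I\subseteq[n]$ let $\Delta_I=\mathrm{conv}(e_k:k\in I)\subset\mathbb R^n$. For nonnegative integers $y_1,\dots,y_m$, $P_G=P_G(y_1,\dots,y_m)=y_1\Delta_{I_1}+\cdots+y_m\Delta_{I_m}$ (Minkowski sum); it lies in the hyperplane $H=\{x:\sum_kx_k=\sum_jy_j\}$. The trimmed generalized permutohedron is $P_G^-(y_1,\dots,y_m)=\{x\in\mathbb R^n: x+\Delta_{[n]}\subseteq P_G\}$. Fix $c>0$ sufficiently large and let $\infty_1=(\sum_jy_j+(n-1)c,-c,\dots,-c)\in H$. For a polytope $Q\subseteq H$, a facet $F$ of $Q$ is negative if the hyperplane (inside $H$) defining $F$ separates $\infty_1$ from the interior of $Q$, and positive otherwise. A point of $Q$ is good if it lies on no positive facet of $Q$.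
   Formalization: P_G(y₁,…,yₘ) is further required to have nonempty interior relative to the hyperplane H, that is, to be full-dimensional inside H. The statement above fails without it. *)

From HB Require Import structures.
From mathcomp Require Import all_boot all_order all_algebra.
From mathcomp Require Import reals.
Set Implicit Arguments. Unset Strict Implicit. Unset Printing Implicit Defensive.
Import Order.TTheory GRing.Theory Num.Theory.
Local Open Scope ring_scope.

Section Defs.
Variable R : realType.

(* Points of R^n are functions 'I_n -> R; coordinate k : 'I_n is the
   paper's coordinate k+1 (so e_1 is the coordinate with val k = 0). *)

Definition dotp n (a x : 'I_n -> R) : R := \sum_k a k * x k.

Definition in_simplex n (I : pred 'I_n) (d : 'I_n -> R) : Prop :=
  (forall k, 0 <= d k) /\ (forall k, ~~ I k -> d k = 0) /\ \sum_k d k = 1.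

(* G given by its edge relation E i k  <=>  (i, \bar k) is an edge; I_i = E i *)
Definition no_isolated m n (E : 'I_m -> 'I_n -> bool) : Prop :=
  (forall i, exists k, E i k) /\ (forall k, exists i, E i k).

(* P_G(y) = y_1 Delta_{I_1} + ... + y_m Delta_{I_m} (Minkowski sum) *)
Definition PG m n (E : 'I_m -> 'I_n -> bool) (y : 'I_m -> nat)
    (x : 'I_n -> R) : Prop :=
  exists d : 'I_m -> 'I_n -> R,
    (forall i, in_simplex (E i) (d i)) /\
    (forall k, x k = \sum_i (y i)%:R * d i k).

Definition PGminus m n (E : 'I_m -> 'I_n -> bool) (y : 'I_m -> nat)
    (x : 'I_n -> R) : Prop :=
  forall d : 'I_n -> R, in_simplex predT d -> PG E y (fun k => x k + d k).

Definition inH n (s : R) (x : 'I_n -> R) : Prop := \sum_k x k = s.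

Definition interiorH n (s : R) (Q : ('I_n -> R) -> Prop) (z : 'I_n -> R) : Prop :=
  inH s z /\ exists eps : R, 0 < eps /\
    forall w, inH s w -> (forall k, `|w k - z k| < eps) -> Q w.

Definition affdim_ge n (F : ('I_n -> R) -> Prop) (d : nat) : Prop :=
  exists (x0 : 'I_n -> R) (X : 'I_d -> 'I_n -> R),
    F x0 /\ (forall j, F (X j)) /\
    \rank (\matrix_(j < d, k < n) (X j k - x0 k)) = d.

Definition affdim_eq n (F : ('I_n -> R) -> Prop) (d : nat) : Prop :=
  affdim_ge F d /\ ~ affdim_ge F d.+1.

(* {x in H : a.x = b} is a hyperplane inside H (a not parallel to (1,..,1)),
   a.x <= b is valid on Q and Q \cap {a.x = b} is a facet of Q, i.e. a face of
   dimension dim H - 1 = n - 2. *)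
Definition facet_ineq n (Q : ('I_n -> R) -> Prop) (a : 'I_n -> R) (b : R) : Prop :=
  (exists k1 k2, a k1 != a k2) /\
  (forall x, Q x -> dotp a x <= b) /\
  affdim_eq (fun x => Q x /\ dotp a x = b) n.-2.

Definition separates n (p : 'I_n -> R) (S : ('I_n -> R) -> Prop)
    (a : 'I_n -> R) (b : R) : Prop :=
  (b < dotp a p /\ forall z, S z -> dotp a z < b) \/
  (dotp a p < b /\ forall z, S z -> b < dotp a z).

Definition infty1 n (s c : R) : 'I_n -> R :=
  fun k => if val k == 0%N then s + (n.-1)%:R * c else - c.

Definition positive_facet n (s : R) (Q : ('I_n -> R) -> Prop) (pinf : 'I_n -> R)
    (a : 'I_n -> R) (b : R) : Prop :=
  facet_ineq Q a b /\ ~ separates pinf (interiorH s Q) a b.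

Definition good_point n (s : R) (Q : ('I_n -> R) -> Prop) (pinf : 'I_n -> R)
    (x : 'I_n -> R) : Prop :=
  Q x /\ ~ (exists a b, positive_facet s Q pinf a b /\ dotp a x = b).

Definition sumy m (y : 'I_m -> nat) : R := \sum_i (y i)%:R.

End Defs.

(* The points of P_G are the outflows x_k = sum_i y_i d_ik of flows d, each row d_i being a
   probability vector supported on I_i; and p lies in P_G^- iff p + e_k lies in P_G for every k.
   If so, every facet through p + e_1 has its normal maximal at coordinate 1, which puts
   infty_1 strictly beyond it: p + e_1 is good.
   Conversely, let q = p + e_1 be good and move q along e_k - e_1 as far as possible inside
   P_G, say to q + t (e_k - e_1) (the maximum exists by compactness). If t < 1, no augmenting
   path leads from k to 1 in the residual graph of an optimal flow, so the set T reachable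
   from k is tight for the valid inequality sum_T x <= f(T), where f(T) is the sum of the y_i
   over the rows adjacent to T; integrality of q and f then forces t = 0. Refining T to a set
   P such that P and its complement are both connected through the rows feeding them makes
   sum_P x <= f(P) a facet through q, and it is positive because infty_1 has negative
   coordinates on P. *)

From HB Require Import structures.
From mathcomp Require Import all_boot all_order all_algebra.
From mathcomp Require Import reals boolp classical_sets topology normedtype derive.
From mathcomp Require Import ring lra zify.
(* fintype and finset again, so that [setT], [in_setT], [subset_trans] are theirs
   rather than those of classical_sets *)
From mathcomp Require Import fintype finset.
Import Order.TTheory GRing.Theory Num.Theory.
Import numFieldNormedType.Exports.
Local Open Scope ring_scope.

Set Implicit Arguments. Unset Strict Implicit. Unset Printing Implicit Defensive.

Section Flows.
Variables (R : realType) (m n : nat) (E : 'I_m -> 'I_n -> bool) (y : 'I_m -> nat).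

(* [PG E y x] unfolds to: [x k = outflow d k] for all [k], for some flow [d]. *)
Definition flow (d : 'I_m -> 'I_n -> R) := forall i, in_simplex (E i) (d i).

Definition outflow (d : 'I_m -> 'I_n -> R) (k : 'I_n) : R := \sum_i (y i)%:R * d i k.

Definition touches (S : {set 'I_n}) (i : 'I_m) : bool := [exists j in S, E i j].

Definition capacity (S : {set 'I_n}) : R := \sum_i (y i)%:R * (touches S i)%:R.

Definition flow_closed (d : 'I_m -> 'I_n -> R) (S : {set 'I_n}) :=
  forall i j, (0 < y i)%N -> touches S i -> 0 < d i j -> j \in S.

Lemma touchesP (S : {set 'I_n}) i : reflect (exists2 j, j \in S & E i j) (touches S i).
Proof.
apply: (iffP existsP); first by move=> [j /andP[]]; exists j.
by move=> [j jS Eij]; exists j; rewrite jS.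
Qed.

Section OneFlow.
Variable d : 'I_m -> 'I_n -> R.
Hypothesis fd : flow d.

Lemma flow_ge0 i j : 0 <= d i j.
Proof. by have [] := fd i. Qed.

Lemma flow_edge i j : d i j != 0 -> E i j.
Proof. by have [_ [supp _]] := fd i; apply: contraR => /supp ->. Qed.

Lemma flow_sum1 i : \sum_j d i j = 1.
Proof. by have [_ []] := fd i. Qed.

Lemma flow_le1 i j : d i j <= 1.
Proof.
rewrite -(flow_sum1 i) (bigD1 j) //= lerDl.
by apply: sumr_ge0 => l _; exact: flow_ge0.
Qed.

Lemma outflow_ge0 k : 0 <= outflow d k.
Proof. by apply: sumr_ge0 => i _; rewrite mulr_ge0 ?flow_ge0. Qed.

Lemma sum_outflow : \sum_k outflow d k = sumy R y.
Proof.
rewrite /outflow exchange_big; apply: eq_bigr => i _.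
by rewrite -mulr_sumr flow_sum1 mulr1.
Qed.

Lemma sum_row_untouched (S : {set 'I_n}) i : ~~ touches S i -> \sum_(j in S) d i j = 0.
Proof.
move=> nt; apply: big1 => j jS; apply: contraNeq nt => /flow_edge Eij.
by apply/touchesP; exists j.
Qed.

Lemma sum_outflow_le_capacity (S : {set 'I_n}) : \sum_(j in S) outflow d j <= capacity S.
Proof.
rewrite /outflow exchange_big; apply: ler_sum => i _.
rewrite -mulr_sumr ler_wpM2l //; case: (boolP (touches S i)) => [_|/sum_row_untouched -> //].
rewrite -(flow_sum1 i) [leRHS](bigID (mem S)) /= lerDl.
by apply: sumr_ge0 => j _; exact: flow_ge0.
Qed.

Lemma sum_outflow_closed (S : {set 'I_n}) :
  flow_closed d S -> \sum_(j in S) outflow d j = capacity S.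
Proof.
move=> closedS; rewrite /outflow exchange_big; apply: eq_bigr => i _.
rewrite -mulr_sumr; have [->|yi] := posnP (y i); first by rewrite !mul0r.
congr (_ * _); case: (boolP (touches S i)) => [tS|/sum_row_untouched -> //].
rewrite -(flow_sum1 i) [RHS](bigID (mem S)) /= [X in _ = _ + X]big1 ?addr0 //.
move=> j jS; apply: contraNeq jS => dij.
by apply: closedS yi tS _; rewrite lt_def dij flow_ge0.
Qed.

End OneFlow.

Lemma outflow_convex (K : finType) (w : K -> R) (F : K -> 'I_m -> 'I_n -> R) j :
  outflow (fun i j => \sum_k w k * F k i j) j = \sum_k w k * outflow (F k) j.
Proof.
rewrite /outflow; under eq_bigr do rewrite mulr_sumr; rewrite exchange_big /=.
by apply: eq_bigr => k _; rewrite mulr_sumr; apply: eq_bigr => i _; rewrite mulrCA.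
Qed.

Lemma flow_convex (K : finType) (w : K -> R) (F : K -> 'I_m -> 'I_n -> R) :
  (forall k, 0 <= w k) -> \sum_k w k = 1 -> (forall k, flow (F k)) ->
  flow (fun i j => \sum_k w k * F k i j).
Proof.
move=> w_ge0 w_sum fF i; split=> [j|].
  by apply: sumr_ge0 => k _; rewrite mulr_ge0 ?(flow_ge0 (fF k)).
split=> [j nEij|].
  by apply: big1 => k _; have [_ [supp _]] := fF k i; rewrite supp ?mulr0.
rewrite exchange_big /= -[RHS]w_sum; apply: eq_bigr => k _.
by rewrite -mulr_sumr (flow_sum1 (fF k)) mulr1.
Qed.

End Flows.

Arguments capacity {R m n} E y S.

Section PG.
Variables (R : realType) (m n : nat) (E : 'I_m -> 'I_n -> bool) (y : 'I_m -> nat).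

Lemma capacity_ge0 S : 0 <= capacity E y S :> R.
Proof. by apply: sumr_ge0 => i _; rewrite mulr_ge0 ?ler0n. Qed.

Lemma sum_PG (x : 'I_n -> R) : PG E y x -> \sum_k x k = sumy R y.
Proof. by move=> [d [fd xE]]; rewrite (eq_bigr _ (fun k _ => xE k)) (sum_outflow y fd). Qed.

Lemma PG_inH_ge0 (x : 'I_n -> R) : PG E y x -> inH (sumy R y) x /\ forall k, 0 <= x k.
Proof.
move=> xPG; split; first exact: sum_PG.
by case: xPG => d [fd xE] k; rewrite xE; exact: outflow_ge0.
Qed.

End PG.

Section Vectors.
Variables (R : realType) (n : nat).
Implicit Types (a x : 'I_n -> R) (k : 'I_n).

Definition unitv k : 'I_n -> R := fun j => (j == k)%:R.

Definition transfer x (t : R) (k1 k2 : 'I_n) : 'I_n -> R :=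
  fun j => x j + t * (unitv k1 j - unitv k2 j).

Lemma sum_mul_unitv (F : 'I_n -> R) k : \sum_j F j * unitv k j = F k.
Proof.
rewrite (bigD1 k) //= /unitv eqxx mulr1 big1 ?addr0 // => j /negbTE ->.
by rewrite mulr0.
Qed.

Lemma unitvC k j : unitv k j = unitv j k.
Proof. by rewrite /unitv eq_sym. Qed.

Lemma sum_unitv_in (S : {set 'I_n}) k : \sum_(j in S) unitv k j = (k \in S)%:R.
Proof.
rewrite big_mkcond -[RHS](sum_mul_unitv (fun j => (j \in S)%:R)).
by apply: eq_bigr => j _; case: (j \in S); rewrite ?mul1r ?mul0r.
Qed.

Lemma sum_unitv k : \sum_j unitv k j = 1.
Proof. by rewrite -[RHS](sum_mul_unitv (fun=> 1) k); under [RHS]eq_bigr do rewrite mul1r. Qed.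

Lemma unitv_simplex k : in_simplex predT (unitv k).
Proof. by split=> [j|]; [rewrite ler0n | split=> [//|]; exact: sum_unitv]. Qed.

Lemma dotp_unitv a k : dotp a (unitv k) = a k.
Proof. exact: sum_mul_unitv. Qed.

Lemma dotpD a x x' : dotp a (fun j => x j + x' j) = dotp a x + dotp a x'.
Proof. by rewrite /dotp -big_split; apply: eq_bigr => j _; rewrite mulrDr. Qed.

Lemma dotpB a x x' : dotp a (fun j => x j - x' j) = dotp a x - dotp a x'.
Proof. by rewrite /dotp -sumrB; apply: eq_bigr => j _; rewrite mulrBr. Qed.

Lemma dotp_transfer a x t k1 k2 : dotp a (transfer x t k1 k2) = dotp a x + t * (a k1 - a k2).
Proof.
rewrite /dotp -(sum_mul_unitv a k1) -(sum_mul_unitv a k2) -sumrB mulr_sumr -big_split.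
by apply: eq_bigr => j _; rewrite /transfer mulrDr mulrCA mulrBr.
Qed.

Lemma transfer0 x k1 k2 : transfer x 0 k1 k2 = x.
Proof. by apply/funext => j; rewrite /transfer mul0r addr0. Qed.

Lemma transfer_add x s t k1 k2 :
  transfer (transfer x s k1 k2) t k1 k2 = transfer x (s + t) k1 k2.
Proof. by apply/funext => j; rewrite /transfer mulrDl addrA. Qed.

Lemma transfer_transfer x t k1 k2 k3 :
  transfer (transfer x t k1 k2) t k2 k3 = transfer x t k1 k3.
Proof. by apply/funext => j; rewrite /transfer; ring. Qed.

Lemma transfer_id x t k : transfer x t k k = x.
Proof. by apply/funext => j; rewrite /transfer subrr mulr0 addr0. Qed.

Lemma transfer_other x t k1 k2 j : j != k1 -> j != k2 -> transfer x t k1 k2 j = x j.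
Proof. by rewrite /transfer /unitv => /negbTE -> /negbTE ->; rewrite subrr mulr0 addr0. Qed.

Lemma transfer_l x t k1 k2 : k1 != k2 -> transfer x t k1 k2 k1 = x k1 + t.
Proof. by rewrite /transfer /unitv eqxx => /negbTE ->; rewrite subr0 mulr1. Qed.

Lemma transfer_r x t k1 k2 : k1 != k2 -> transfer x t k1 k2 k2 = x k2 - t.
Proof. by rewrite /transfer /unitv eqxx eq_sym => /negbTE ->; rewrite sub0r mulrN1. Qed.

Lemma sum_transfer_in (S : {set 'I_n}) x t k1 k2 :
  \sum_(j in S) transfer x t k1 k2 j = \sum_(j in S) x j + t * ((k1 \in S)%:R - (k2 \in S)%:R).
Proof. by rewrite big_split /= -mulr_sumr sumrB !sum_unitv_in. Qed.

Lemma sum_transfer x t k1 k2 : \sum_j transfer x t k1 k2 j = \sum_j x j.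
Proof. by rewrite big_split /= -mulr_sumr sumrB !sum_unitv subrr mulr0 addr0. Qed.

Lemma transfer_dist x t k1 k2 j : `|transfer x t k1 k2 j - x j| <= `|t|.
Proof.
rewrite /transfer addrC addKr normrM /unitv ler_piMr //.
by case: (j == k1); case: (j == k2); rewrite /= ?subrr ?subr0 ?sub0r ?normrN ?normr0 ?normr1.
Qed.

Lemma add_unitv_ord0E x k0 : val k0 = 0%N ->
  (fun k => x k + if val k == 0%N then 1 else 0) = (fun k => x k + unitv k0 k).
Proof. by move=> k00; apply: funext => j; rewrite /unitv -(inj_eq val_inj) k00; case: eqP. Qed.

Lemma sum_infty1 (s c : R) k0 : val k0 = 0%N -> \sum_j infty1 (n:=n) s c j = s.
Proof.
move=> k00; rewrite (bigD1 k0) //= {1}/infty1 k00 eqxx.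
rewrite (eq_bigr (fun=> - c)) => [|j jk0]; last first.
  by rewrite /infty1 -k00 (inj_eq val_inj) (negbTE jk0).
by rewrite sumr_const cardC1 card_ord mulNrn -mulr_natl; ring.
Qed.

End Vectors.

Arguments unitv {R n} k j.
Arguments transfer {R n} x t k1 k2 j.

Section Interior.
Variables (R : realType) (n : nat) (s : R) (Q : ('I_n -> R) -> Prop) (z : 'I_n -> R).
Hypothesis zQ : interiorH s Q z.

Lemma interiorH_mem : Q z.
Proof. by have [zH [e [e0 ball_e]]] := zQ; apply: ball_e => // k; rewrite subrr normr0. Qed.

Lemma interiorH_transfer : exists2 t : R, 0 < t & forall k1 k2, Q (transfer z t k1 k2).
Proof.
have [zH [e [e0 ball_e]]] := zQ; exists (e / 2) => [|k1 k2]; first by lra.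
apply: ball_e => [|k]; first by rewrite /inH sum_transfer.
by apply: le_lt_trans (transfer_dist _ _ _ _ _) _; rewrite ger0_norm; lra.
Qed.

Lemma interiorH_dotp_lt (a : 'I_n -> R) (b : R) : (exists k1 k2, a k1 != a k2) ->
  (forall x, Q x -> dotp a x <= b) -> dotp a z < b.
Proof.
move=> [k1 [k2 a12]] valid; have [t t0 Qtransfer] := interiorH_transfer.
wlog lt12 : k1 k2 a12 / a k2 < a k1.
  move=> W; case: (ltgtP (a k2) (a k1)) => [|h|h]; first exact: W.
    by apply: (W k2 k1); rewrite // eq_sym.
  by rewrite h eqxx in a12.
have := valid _ (Qtransfer k1 k2); rewrite dotp_transfer; nra.
Qed.

End Interior.

Section Vertices.
Variables (R : realType) (n : nat) (s c : R) (Q : ('I_n -> R) -> Prop).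
Variables (p : 'I_n -> R) (k0 : 'I_n).
Hypotheses (c0 : 0 < c) (k00 : val k0 = 0%N).
Hypothesis Q_nonneg : forall x, Q x -> inH s x /\ forall j, 0 <= x j.
Hypothesis Q_vertices : forall k, Q (fun j => p j + unitv k j).

Lemma good_point_of_vertices :
  good_point s Q (infty1 s c) (fun j => p j + unitv k0 j).
Proof.
set q := fun j => p j + unitv k0 j.
split=> [|[a [b [[[nonconst [valid _]] not_sep] qb]]]]; first exact: Q_vertices.
apply: not_sep; left; split; last by move=> x xQ; exact: (interiorH_dotp_lt xQ nonconst valid).
have a_max k : a k <= a k0.
  by have := valid _ (Q_vertices k); rewrite dotpD dotp_unitv -qb dotpD dotp_unitv; lra.
have [k3 a3] : exists k3, a k3 < a k0.
  move: nonconst => [k1 [k2]]; case: (ltrP (a k1) (a k0)) => [|a1]; first by exists k1.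
  have e1 : a k1 = a k0 by apply/eqP; rewrite eq_le a_max a1.
  by rewrite e1 => a2; exists k2; rewrite lt_neqAle a_max eq_sym a2.
have [qH q_ge0] : inH s q /\ forall j, 0 <= q j := Q_nonneg (Q_vertices k0).
have gap : dotp a (infty1 s c) - b = \sum_j (a k0 - a j) * (c + q j).
  have sum0 : \sum_j (infty1 s c j - q j) = 0.
    by rewrite sumrB (sum_infty1 _ _ k00) qH subrr.
  rewrite -qb -dotpB /dotp; transitivity (\sum_j (a j - a k0) * (infty1 s c j - q j)).
    under [RHS]eq_bigr do rewrite mulrBl.
    by rewrite sumrB -mulr_sumr sum0 mulr0 subr0.
  apply: eq_bigr => j _; case: (eqVneq j k0) => [->|jk0]; first by rewrite subrr !mul0r.
  by rewrite /infty1 -k00 (inj_eq val_inj) (negbTE jk0); ring.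
rewrite -subr_gt0 gap (bigD1 k3) //=; apply: ltr_pwDl.
  by rewrite mulr_gt0 ?subr_gt0 // ltr_wpDr.
by apply: sumr_ge0 => j _; rewrite mulr_ge0 ?subr_ge0 ?a_max // addr_ge0 // ltW.
Qed.

End Vertices.

Lemma PGminus_vertices (R : realType) m n (E : 'I_m -> 'I_n -> bool) y (x : 'I_n -> R) :
  PGminus E y x <-> forall k, PG E y (fun j => x j + unitv k j).
Proof.
split=> [minus k|vert w [w_ge0 [_ w_sum]]]; first exact/minus/unitv_simplex.
have /choice [F FP] := vert.
exists (fun i j => \sum_k w k * F k i j); split.
  by apply: flow_convex => // k; have [] := FP k.
move=> j; rewrite -[RHS]/(outflow y (fun i j => \sum_k w k * F k i j) j) outflow_convex.
transitivity (\sum_k w k * (x j + unitv k j)).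
  under eq_bigr do rewrite mulrDr unitvC.
  by rewrite big_split /= -mulr_suml w_sum mul1r sum_mul_unitv.
by apply: eq_bigr => k _; rewrite (proj2 (FP k)).
Qed.

Section MaxTransfer.
Variables (R : realType) (m n : nat) (E : 'I_m -> 'I_n -> bool) (y : 'I_m -> nat).
Local Open Scope classical_set_scope.

Definition flow_of_rV (v : 'rV[R]_(m * n)) : 'I_m -> 'I_n -> R :=
  fun i j => v ord0 (mxvec_index i j).

Definition rV_of_flow (d : 'I_m -> 'I_n -> R) : 'rV[R]_(m * n) := mxvec (\matrix_(i, j) d i j).

Lemma rV_of_flowK : cancel rV_of_flow flow_of_rV.
Proof. by move=> d; apply/funext => i; apply/funext => j; rewrite /flow_of_rV mxvecE mxE. Qed.

Lemma continuous_outflow j : continuous (fun v => outflow y (flow_of_rV v) j).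
Proof.
apply: (continuous_big (op := +%R)) => [|i _]; first exact: add_continuous.
move=> v; apply: (continuous_comp (f := fun x => flow_of_rV x i j) (g := *%R (y i)%:R)).
  exact: coord_continuous.
exact: mulrl_continuous.
Qed.

Variables (q : 'I_n -> R) (k k0 : 'I_n).

Definition transfer_window (j : 'I_n) : set R :=
  if j == k then [set x | q k <= x] `&` [set x | x <= q k + 1]
  else if j == k0 then [set: R] else [set q j].

(* the flows, as vectors, with outflow [transfer q t k k0] for some [t] in [0, 1], written as
   an intersection of closed sets *)
Definition transfer_flows : set 'rV[R]_(m * n) :=
  \bigcap_ij ((fun v => flow_of_rV v ij.1 ij.2) @^-1`
                          (if E ij.1 ij.2 then [set x | 0 <= x] else [set 0]))
  `&` \bigcap_i ((fun v => \sum_j flow_of_rV v i j) @^-1` [set 1])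
  `&` \bigcap_j ((fun v => outflow y (flow_of_rV v) j) @^-1` transfer_window j)
  `&` (fun v => outflow y (flow_of_rV v) k + outflow y (flow_of_rV v) k0) @^-1` [set q k + q k0].

Lemma closed_transfer_flows : closed transfer_flows.
Proof.
have cont_coord ij : continuous (fun v : 'rV[R]_(m * n) => flow_of_rV v ij.1 ij.2).
  exact: coord_continuous.
repeat apply: closedI; try apply: closed_bigI => a _; apply: preimage_closed.
- by move=> v _; exact: cont_coord.
- by case: ifP => _; [exact: closed_ge | exact: closed_eq].
- move=> v _; apply: (continuous_big (op := +%R)) => [|j _]; first exact: add_continuous.
  exact: cont_coord (a, j).
- exact: closed_eq.
- by move=> v _; exact: continuous_outflow.
- rewrite /transfer_window; case: ifP => _.
    by apply: closedI; [exact: closed_ge | exact: closed_le].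
  by case: ifP => _; [exact: closedT | exact: closed_eq].
- by move=> v _; apply: continuousD; exact: continuous_outflow.
- exact: closed_eq.
Qed.

Hypothesis kk0 : k != k0.

Lemma transfer_flowsP v : transfer_flows v <->
  flow E (flow_of_rV v) /\
  exists2 t, 0 <= t <= 1 & forall j, transfer q t k k0 j = outflow y (flow_of_rV v) j.
Proof.
split.
  move=> [[[nonneg rows] window] /= pair]; split=> [i|].
    split=> [j|]; first by have := nonneg (i, j) I; rewrite /=; case: ifP => // _ ->.
    split=> [j nEij|]; last exact: rows i I.
    by have := nonneg (i, j) I; rewrite /= (negbTE nEij).
  exists (outflow y (flow_of_rV v) k - q k) => [|j].
    by have := window k I; rewrite /transfer_window eqxx => -[/= ? ?]; apply/andP; split; lra.
  have [->|jk] := eqVneq j k; first by rewrite transfer_l //; ring.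
  have [->|jk0] := eqVneq j k0; first by rewrite transfer_r //; lra.
  have := window j I; rewrite /transfer_window (negbTE jk) (negbTE jk0).
  by rewrite transfer_other.
move=> [fd [t /andP[t0 t1] dE]]; split; first split; first split.
- move=> [i j] _ /=; case: ifP => [_|/negbT nEij]; first exact: flow_ge0.
  by have [_ [->]] := fd i.
- by move=> i _; exact: flow_sum1.
- move=> j _; rewrite /= -dE /transfer_window.
  have [->|jk] := eqVneq j k; first by rewrite transfer_l //=; split; lra.
  have [->|jk0] := eqVneq j k0; first by [].
  by rewrite transfer_other.
- by rewrite /= -!dE transfer_l // transfer_r //; ring.
Qed.

Lemma max_transfer : PG E y q ->
  exists t, [/\ 0 <= t <= 1, PG E y (transfer q t k k0) &
                forall t', t < t' <= 1 -> ~ PG E y (transfer q t' k k0)].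
Proof.
move=> [dq [fdq qE]].
have flowsP t d : 0 <= t <= 1 -> flow E d -> (forall j, transfer q t k k0 j = outflow y d j) ->
    transfer_flows (rV_of_flow d).
  by move=> t01 fd dE; apply/transfer_flowsP; rewrite rV_of_flowK; split=> //; exists t.
have nonempty : transfer_flows !=set0.
  exists (rV_of_flow dq); apply: (flowsP 0) => //; first by rewrite lexx ler01.
  by move=> j; rewrite /transfer mul0r addr0; exact: qE.
have bounded : transfer_flows `<=` [set v | forall a, `[0, 1] (v ord0 a)].
  move=> v /transfer_flowsP[fv _] a; case/mxvec_indexP: a => i j.
  by rewrite /= in_itv /= (flow_ge0 fv) (flow_le1 fv).
have compact_flows : compact transfer_flows.
  apply: subclosed_compact closed_transfer_flows _ bounded.
  exact: (rV_compact (fun=> @segment_compact R 0 1)).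
have [v /set_mem vA vmax] := compact_EVT_max nonempty compact_flows
  (continuous_subspaceT (@continuous_outflow k)).
have /transfer_flowsP [fv [t t01 vE]] := vA.
exists t; split=> // [|t' /andP[tt' t'1] [d' [fd' d'E]]]; first by exists (flow_of_rV v).
have {}d'E : forall j, transfer q t' k k0 j = outflow y d' j := d'E.
have t'01 : 0 <= t' <= 1 by case/andP: t01 => t0 _; rewrite t'1 andbT; lra.
have := vmax _ (mem_set (flowsP t' d' t'01 fd' d'E)).
by rewrite rV_of_flowK -vE -d'E !transfer_l // lerD2l leNgt tt'.
Qed.

End MaxTransfer.

Section Augment.
Variables (R : realType) (m n : nat) (E : 'I_m -> 'I_n -> bool) (y : 'I_m -> nat).

Definition move_mass (d : 'I_m -> 'I_n -> R) i (delta : R) (j j' : 'I_n) :=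
  fun a => transfer (d a) ((a == i)%:R * delta) j j'.

Lemma flow_move_mass d i delta j j' : flow E d -> E i j -> E i j' ->
  0 <= delta <= d i j' -> flow E (move_mass d i delta j j').
Proof.
move=> fd Eij Eij' /andP[delta0 delta_le] a; rewrite /move_mass /transfer /=.
have [->|_] := eqVneq a i; last by under eq_fun do rewrite mul0r mul0r addr0; exact: fd.
under eq_fun do rewrite mul1r; split=> [b|]; last split=> [b nEib|].
- have [->|bj'] := eqVneq b j'.
    by rewrite /unitv eqxx; case: (j' == j); rewrite /= ?subrr ?mulr0 ?addr0 ?(flow_ge0 fd) //; lra.
  rewrite /unitv (negbTE bj') subr0 addr_ge0 ?(flow_ge0 fd) ?mulr_ge0 //.
- have [_ [-> //]] := fd i; rewrite /unitv.
  have [bj|_] := eqVneq b j; first by rewrite bj Eij in nEib.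
  have [bj'|_] := eqVneq b j'; first by rewrite bj' Eij' in nEib.
  by rewrite subrr mulr0 addr0.
- by rewrite big_split /= -mulr_sumr sumrB !sum_unitv subrr mulr0 addr0 (flow_sum1 fd).
Qed.

Lemma outflow_move_mass d i delta j j' :
  outflow y (move_mass d i delta j j') = transfer (outflow y d) ((y i)%:R * delta) j j'.
Proof.
apply/funext => l; rewrite /outflow /move_mass /transfer; under eq_bigr do rewrite mulrDr.
rewrite big_split /= [X in _ + X](bigD1 i) //= eqxx mul1r [X in _ + (_ + X)]big1.
  by rewrite addr0 mulrA.
by move=> a /negbTE ->; rewrite !mul0r mulr0.
Qed.

Lemma move_mass_dist d i delta j j' a b : 0 <= delta ->
  `|move_mass d i delta j j' a b - d a b| <= delta.
Proof.
move=> delta0; apply: le_trans (transfer_dist _ _ _ _ _) _.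
by case: (a == i); rewrite /= ?mul1r ?mul0r ?normr0 // ger0_norm.
Qed.

Section Residual.
Variables (d : 'I_m -> 'I_n -> R) (k : 'I_n).
Hypothesis fd : flow E d.

(* reachability from [k] in the residual graph of [d]: a row [i] of positive weight that is
   adjacent to a reached [j] can shift to [j] some of the mass it sends to [j'] *)
Inductive residual_reach : 'I_n -> Prop :=
| residual_reach_refl : residual_reach k
| residual_reach_step j i j' :
    residual_reach j -> E i j -> (0 < y i)%N -> 0 < d i j' -> residual_reach j'.

Lemma augment j : residual_reach j ->
  exists C eps : R, [/\ 0 <= C, 0 < eps & forall delta, 0 <= delta <= eps ->
    exists2 d', flow E d' /\ (forall a b, `|d' a b - d a b| <= C * delta) &
                outflow y d' = transfer (outflow y d) delta k j].
Proof.
elim=> [|j0 i j' _ [C [eps [C0 eps0 IH]]] Eij0 yi dij'].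
  exists 0, 1; split=> // delta _; exists d; last by rewrite transfer_id.
  by split=> // a b; rewrite subrr normr0 mul0r.
set w : R := (y i)%:R^-1.
have w0 : 0 < w by rewrite invr_gt0 ltr0n.
have yw : (y i)%:R * w = 1 by rewrite mulfV // pnatr_eq0 -lt0n.
have Cw : 0 < C + w by lra.
exists (C + w), (Num.min eps (d i j' / (C + w))).
split; [exact: ltW | by rewrite lt_min eps0 divr_gt0 |].
move=> delta /andP[delta0]; rewrite le_min => /andP[delta_eps delta_dij'].
have [d' [fd' d'_dist] d'E] := IH delta (introT andP (conj delta0 delta_eps)).
have Eij' : E i j' by apply: (flow_edge fd); rewrite gt_eqF.
exists (move_mass d' i (delta * w) j0 j'); first split.
- apply: flow_move_mass => //; rewrite mulr_ge0 ?(ltW w0) //=.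
  have := d'_dist i j'; rewrite ler_norml => /andP[+ _].
  by move: delta_dij'; rewrite ler_pdivlMr //; nra.
- move=> a b; apply: le_trans (ler_distD (d' a b) _ _) _.
  rewrite mulrDl addrC lerD ?d'_dist // [w * delta]mulrC.
  by apply: move_mass_dist; rewrite mulr_ge0 // ltW.
- by rewrite outflow_move_mass d'E mulrCA yw mulr1 transfer_transfer.
Qed.

End Residual.

End Augment.

Section Connectivity.
Variables (m n : nat) (E : 'I_m -> 'I_n -> bool).
Implicit Types (P S : {set 'I_n}) (sel : pred 'I_m).

Definition respects P sel S := forall i, sel i ->
  (forall j, j \in P -> E i j -> j \in S) \/ (forall j, j \in P -> E i j -> j \notin S).

(* the hypergraph on [P] whose edges are the neighbourhoods of the selected rows is connected *)
Definition connected_on P sel := forall S, respects P sel S ->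
  (forall j, j \in P -> j \in S) \/ (forall j, j \in P -> j \notin S).

Lemma respectsC P sel S : respects P sel S -> respects P sel (~: S).
Proof.
move=> resp i seli; case: (resp i seli) => all_in; [right | left] => j jP Eij;
  by rewrite inE ?negbK all_in.
Qed.

Lemma connected_onP P sel x : x \in P ->
  (forall S, respects P sel S -> x \in S -> forall j, j \in P -> j \in S) -> connected_on P sel.
Proof.
move=> xP base S resp; case xS: (x \in S); first by left; exact: base.
right=> j jP; have := base _ (respectsC resp); rewrite inE xS => /(_ isT j jP).
by rewrite inE.
Qed.

Lemma minset_connected_on P sel x (Phi : pred {set 'I_n}) : x \in P -> minset Phi P ->
  (forall S, respects P sel S -> x \in S -> Phi (P :&: S)) -> connected_on P sel.
Proof.
move=> xP /minsetP[_ minP] stable; apply: (connected_onP xP) => S resp xS j jP.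
have PS : P :&: S = P := minP _ (stable S resp xS) (subsetIl _ _).
by move: jP; rewrite -PS => /setIP[].
Qed.

Lemma connected_on_const (T : eqType) P sel x (w : 'I_n -> T) :
  x \in P -> connected_on P sel ->
  (forall i u v, sel i -> u \in P -> v \in P -> E i u -> E i v -> w u = w v) ->
  forall j, j \in P -> w j = w x.
Proof.
move=> xP connP w_star; pose S := [set j | w j == w x].
case: (connP S) => [i seli | all_in j /all_in | none].
- case: (boolP [exists j1, [&& j1 \in P, E i j1 & j1 \in S]]) => [|/existsPn none].
    move=> /existsP[j1 /and3P[j1P Eij1]]; rewrite inE => j1S; left=> j jP Eij.
    by rewrite inE (w_star i j j1).
  by right=> j jP Eij; have := none j; rewrite jP Eij.
- by rewrite inE => /eqP.
- by have := none x xP; rewrite inE eqxx.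
Qed.

End Connectivity.

Section FacetSet.
Variables (R : realType) (m n : nat) (E : 'I_m -> 'I_n -> bool) (y : 'I_m -> nat).
Variables (d : 'I_m -> 'I_n -> R) (k k0 : 'I_n).
Hypothesis fd : flow E d.

Definition closed_cut (J : {set 'I_n}) := [/\ k \in J, k0 \notin J & flow_closed E y d J].

Lemma closed_cut_meet J S : closed_cut J ->
  respects E J (fun i => (0 < y i)%N && touches E J i) S -> k \in S -> closed_cut (J :&: S).
Proof.
move=> [kJ k0J closedJ] resp kS; split; rewrite ?inE ?kJ ?kS ?negb_and ?k0J //.
move=> i j yi /touchesP[j0 /setIP[j0J j0S] Eij0] dij.
have tJ : touches E J i by apply/touchesP; exists j0.
have jJ := closedJ i j yi tJ dij.
have Eij : E i j by apply: (flow_edge fd); rewrite gt_eqF.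
rewrite inE jJ; case: (resp i) => [|all_in|none]; [by rewrite yi tJ | exact: all_in |].
by have := none j0 j0J Eij0; rewrite j0S.
Qed.

Variable J : {set 'I_n}.
Hypothesis minJ : minset (fun J => `[< closed_cut J >]) J.

Let cutJ : closed_cut J.
Proof. by have /minsetP[/asboolP] := minJ. Qed.

Let connectedJ : connected_on E J (fun i => (0 < y i)%N && touches E J i).
Proof.
have [kJ _ _] := cutJ; apply: minset_connected_on kJ minJ _ => S resp kS.
exact/asboolP/closed_cut_meet.
Qed.

Definition outer_sel i := (0 < y i)%N && ~~ touches E J i.

Definition outer_block (K : {set 'I_n}) :=
  [/\ k0 \in K, K \subset ~: J & respects E setT outer_sel K].

Lemma outer_block_meet K S : outer_block K -> respects E K outer_sel S -> k0 \in S ->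
  outer_block (K :&: S).
Proof.
move=> [k0K KJ respK] resp k0S; split; rewrite ?inE ?k0K ?k0S //.
  exact: subset_trans (subsetIl _ _) KJ.
move=> i seli; case: (respK i seli) => [in_K|out_K]; last first.
  by right=> j _ Eij; rewrite inE negb_and out_K.
case: (resp i seli) => [in_S|out_S]; [left | right] => j _ Eij.
  by rewrite inE in_K ?in_S ?in_K.
by rewrite inE negb_and out_S ?in_K ?orbT.
Qed.

Variable K : {set 'I_n}.
Hypothesis minK : minset (fun K => `[< outer_block K >]) K.

Let blockK : outer_block K.
Proof. by have /minsetP[/asboolP] := minK. Qed.

Let J_sub_compl j : j \in J -> j \in ~: K.
Proof.
have [_ /subsetP KJ _] := blockK; move=> jJ; rewrite inE.
by apply: contraL jJ => /KJ; rewrite inE.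
Qed.

Lemma flow_closed_compl : flow_closed E y d (~: K).
Proof.
have [_ _ closedJ] := cutJ; have [_ _ respK] := blockK.
move=> i j yi tK dij; case tJ: (touches E J i); first exact/J_sub_compl/(closedJ i j yi tJ).
have Eij : E i j by apply: (flow_edge fd); rewrite gt_eqF.
case: (respK i) => [|in_K|out_K]; [by rewrite /outer_sel yi tJ | | by rewrite inE out_K].
by move: tK => /touchesP[j0]; rewrite inE => /negP j0K /in_K; rewrite in_setT => /(_ isT).
Qed.

Hypothesis connectedG : connected_on E setT (fun i => (0 < y i)%N).

Lemma connected_compl : connected_on E (~: K) (fun i => (0 < y i)%N && touches E (~: K) i).
Proof.
have [kJ _ _] := cutJ; have [k0K _ respK] := blockK.
apply: (connected_onP (J_sub_compl kJ)) => S resp kS.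
have respJ : respects E J (fun i => (0 < y i)%N && touches E J i) S.
  move=> i /andP[yi tJ].
  have tK : touches E (~: K) i.
    by move: tJ => /touchesP[j0 j0J Eij0]; apply/touchesP; exists j0; rewrite ?J_sub_compl.
  case: (resp i) => [|in_S|out_S]; [by rewrite yi tK | left | right] => j jJ Eij.
    exact/in_S/Eij/J_sub_compl.
  exact/out_S/Eij/J_sub_compl.
have JS j : j \in J -> j \in S.
  by case: (@connectedJ S respJ) => [all_in|none]; [exact: all_in | have := none k kJ; rewrite kS].
case: (@connectedG (~: K :\: S)) => [i yi | all_in | none].
- case: (boolP [exists j0, E i j0 && (j0 \in ~: K :\: S)]) => [|/existsPn none]; last first.
    by right=> j _ Eij; have := none j; rewrite Eij.
  move=> /existsP[j0 /andP[Eij0]]; rewrite !inE => /andP[j0S j0K].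
  have tK : touches E (~: K) i by apply/touchesP; exists j0; rewrite ?inE.
  have out_S : forall j, j \in ~: K -> E i j -> j \notin S.
    case: (resp i) => [|in_S|//]; first by rewrite yi tK.
    by have := in_S j0; rewrite inE j0K (negbTE j0S) => /(_ isT Eij0).
  have tJ : ~~ touches E J i.
    by apply/touchesP => -[j1 j1J Eij1]; have := out_S j1 (J_sub_compl j1J) Eij1; rewrite JS.
  case: (respK i) => [|in_K|out_K]; first by rewrite /outer_sel yi tJ.
    by have := in_K j0 (in_setT _) Eij0; rewrite (negbTE j0K).
  by left=> j _ Eij; rewrite !inE out_K ?in_setT ?out_S ?inE ?out_K ?in_setT.
- by have := all_in k0 (in_setT _); rewrite !inE k0K andbF.
- by move=> j; rewrite inE => jK; have := none j (in_setT _); rewrite !inE jK andbT negbK.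
Qed.

Lemma connected_block : connected_on E K (fun i => (0 < y i)%N && ~~ touches E (~: K) i).
Proof.
have [k0K _ respK] := blockK.
apply: (connected_onP k0K) => S resp k0S.
have connectedK : connected_on E K outer_sel.
  apply: minset_connected_on k0K minK _ => S' resp' k0S'.
  exact/asboolP/outer_block_meet.
case: (connectedK S) => [i seli | // | none]; last by have := none k0 k0K; rewrite k0S.
case: (boolP (touches E K i)) => [tK|/touchesP ntK]; last first.
  by left=> j jK Eij; case: ntK; exists j.
case: (respK i seli) => [in_K|out_K]; last first.
  by move: tK => /touchesP[j jK /out_K]; rewrite in_setT jK => /(_ isT).
have ntK' : ~~ touches E (~: K) i.
  by apply/touchesP => -[j]; rewrite inE => /negP jK /in_K; rewrite in_setT => /(_ isT).
by apply: resp; rewrite ntK' andbT; case/andP: seli.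
Qed.

End FacetSet.

(* Shrink [T] to a minimal closed cut [J], then take a minimal block [K] around [k0] outside
   [J]: both [~: K] and [K] are then connected. *)
Lemma exists_facet_set (R : realType) m n (E : 'I_m -> 'I_n -> bool) y
    (d : 'I_m -> 'I_n -> R) k k0 T :
  flow E d -> connected_on E setT (fun i => (0 < y i)%N) -> closed_cut E y d k k0 T ->
  exists P : {set 'I_n}, [/\ k \in P, k0 \notin P, flow_closed E y d P,
    connected_on E P (fun i => (0 < y i)%N && touches E P i) &
    connected_on E (~: P) (fun i => (0 < y i)%N && ~~ touches E P i)].
Proof.
move=> fd connectedG cutT.
have [J minJ _] := minset_exists (P := fun J => `[< closed_cut E y d k k0 J >]) (asboolT cutT).
have [kJ k0J _] : closed_cut E y d k k0 J by have /minsetP[/asboolP] := minJ.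
have blockJ : outer_block E y k0 J (~: J).
  split; rewrite ?inE ?k0J // => i /andP[_ tJ]; left=> j _ Eij; rewrite inE.
  by apply: contraNN tJ => jJ; apply/touchesP; exists j.
have [K minK _] := minset_exists (P := fun K => `[< outer_block E y k0 J K >]) (asboolT blockJ).
have [k0K KJ _] : outer_block E y k0 J K by have /minsetP[/asboolP] := minK.
exists (~: K); rewrite setCK; split.
- by rewrite inE; apply: contraL kJ => /(subsetP KJ); rewrite inE.
- by rewrite inE negbK.
- exact: (flow_closed_compl fd minJ minK).
- exact: (connected_compl fd minJ minK connectedG).
- exact: (connected_block minK).
Qed.

Section Rank.
Variables (F : fieldType) (N n p : nat) (M : 'M[F]_(N, n)) (B : 'M[F]_(p, n)).

Lemma mxrank_le_orthogonal : M *m B^T = 0 -> (\rank M <= n - \rank B)%N.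
Proof. by move/mulmx0_rank_max; rewrite mxrank_tr; lia. Qed.

Lemma mxrank_ge_kernel : (forall w : 'rV_n, w *m M^T = 0 -> (w <= B)%MS) ->
  (n - \rank B <= \rank M)%N.
Proof.
move=> kerB; have sub : (kermx M^T <= B)%MS.
  by apply/row_subP => r; apply: kerB; apply/sub_kermxP; exact: row_sub.
by have := mxrankS sub; rewrite mxrank_ker mxrank_tr; lia.
Qed.

End Rank.

Lemma affdim_ge_rank (R : realType) n (F : ('I_n -> R) -> Prop) N x0 (X : 'I_N -> 'I_n -> R) d :
  F x0 -> (forall r, F (X r)) -> \rank (\matrix_(r, l) (X r l - x0 l)) = d -> affdim_ge F d.
Proof.
move=> Fx0 FX <-; set M := \matrix_(r, l) _.
exists x0, (fun j => X (maxrankfun M j)); do 2!split=> //.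
have -> : \matrix_(j, l) (X (maxrankfun M j) l - x0 l) = rowsub (maxrankfun M) M.
  by apply/matrixP => j l; rewrite !mxE.
exact/eqP/maxrowsub_free.
Qed.

Section Facet.
Variables (R : realType) (m n : nat) (E : 'I_m -> 'I_n -> bool) (y : 'I_m -> nat).
Variables (P : {set 'I_n}) (k k0 : 'I_n).
Hypotheses (kP : k \in P) (k0P : k0 \notin P).

Definition indicator (S : {set 'I_n}) : 'I_n -> R := fun j => (j \in S)%:R.

Lemma dotp_indicator S x : dotp (indicator S) x = \sum_(j in S) x j.
Proof.
rewrite /dotp [RHS]big_mkcond; apply: eq_bigr => j _; rewrite /indicator.
by case: (j \in S); rewrite ?mul1r ?mul0r.
Qed.

Lemma PG_indicator_le x : PG E y x -> dotp (indicator P) x <= capacity E y P.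
Proof.
move=> [d [fd xE]]; rewrite dotp_indicator (eq_bigr _ (fun j _ => xE j)).
exact: sum_outflow_le_capacity.
Qed.

Definition face x := PG E y x /\ dotp (indicator P) x = capacity E y P.

Definition face_normals : 'M[R]_(2, n) :=
  \matrix_(c, l) (if c == ord0 then indicator P l else indicator (~: P) l).

Lemma rank_face_normals : \rank face_normals = 2%N.
Proof.
pose sel : 'M[R]_(n, 2) := \matrix_(l, c) (l == if c == ord0 then k else k0)%:R.
have id2 : face_normals *m sel = 1%:M.
  apply/matrixP => c c'; rewrite !mxE; under eq_bigr do rewrite !mxE.
  rewrite (bigD1 (if c' == ord0 then k else k0)) //= eqxx mulr1 big1 ?addr0; last first.
    by move=> l /negbTE->; rewrite mulr0.
  by case: c => [[|[|//]] ?]; case: c' => [[|[|//]] ?]; rewrite /indicator ?inE ?kP ?(negbTE k0P).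
apply/eqP; rewrite eqn_leq rank_leq_row /=.
by have := mxrankM_maxl face_normals sel; rewrite id2 mxrank1.
Qed.

Lemma face_rank_le N x0 (X : 'I_N -> 'I_n -> R) : face x0 -> (forall j, face (X j)) ->
  (\rank (\matrix_(j, l) (X j l - x0 l)%R) <= n - 2)%N.
Proof.
move=> [x0PG x0P] FX; rewrite -rank_face_normals; apply: mxrank_le_orthogonal.
apply/matrixP => j c; rewrite !mxE; under eq_bigr do rewrite !mxE.
have [XPG XP] := FX j.
have onP : \sum_l (X j l - x0 l) * indicator P l = 0.
  transitivity (dotp (indicator P) (fun l => X j l - x0 l)).
    by apply: eq_bigr => l _; rewrite mulrC.
  by rewrite dotpB XP x0P subrr.
case: (c == ord0) => //.
transitivity (\sum_l (X j l - x0 l) - \sum_l (X j l - x0 l) * indicator P l).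
  rewrite -sumrB; apply: eq_bigr => l _; rewrite /indicator inE.
  by case: (l \in P); rewrite /= ?mulr1 ?mulr0 ?subr0 ?subrr.
by rewrite onP subr0 sumrB (sum_PG XPG) (sum_PG x0PG) subrr.
Qed.

Hypothesis niso : no_isolated E.

(* the neighbours of [i] on the side of the cut that [i] is forced to feed *)
Definition side_nbrs i : {set 'I_n} := [set j | E i j && ((j \in P) == touches E P i)].

Lemma side_nbrs_edge i j : j \in side_nbrs i -> E i j.
Proof. by rewrite inE => /andP[]. Qed.

Lemma side_nbrs_gt0 i : (0 < #|side_nbrs i|)%N.
Proof.
apply/card_gt0P; case: (boolP (touches E P i)) => [tP | ntP].
  by have /touchesP[j jP Eij] := tP; exists j; rewrite inE Eij jP tP.
have [j Eij] := niso.1 i; exists j; rewrite inE Eij (negbTE ntP) eqbF_neg.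
by apply: contraNN ntP => jP; apply/touchesP; exists j.
Qed.

Definition uniform_flow i j : R := (j \in side_nbrs i)%:R / #|side_nbrs i|%:R.

Definition side_supported (d : 'I_m -> 'I_n -> R) :=
  forall i j, d i j != 0 -> j \in side_nbrs i.

Lemma uniform_flow_pos i j : j \in side_nbrs i -> 0 < uniform_flow i j.
Proof. by move=> ji; rewrite /uniform_flow ji divr_gt0 ?ltr0n ?side_nbrs_gt0. Qed.

Lemma uniform_flow_supported : side_supported uniform_flow.
Proof. by move=> i j; rewrite /uniform_flow; case: (j \in side_nbrs i); rewrite ?mul0r ?eqxx. Qed.

Lemma flow_uniform_flow : flow E uniform_flow.
Proof.
move=> i; split=> [j|]; first by rewrite divr_ge0 ?ler0n.
split=> [j nEij|]; first by apply: contraNeq nEij => /uniform_flow_supported/side_nbrs_edge.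
rewrite /uniform_flow -mulr_suml.
have -> : \sum_j ((j \in side_nbrs i)%:R : R) = #|side_nbrs i|%:R.
  by rewrite -sum1_card natr_sum [RHS]big_mkcond; apply: eq_bigr => j _; case: (j \in _).
by rewrite mulfV // pnatr_eq0 -lt0n side_nbrs_gt0.
Qed.

Lemma face_outflow d : flow E d -> side_supported d -> face (outflow y d).
Proof.
move=> fd supp; split; first by exists d.
rewrite dotp_indicator; apply: sum_outflow_closed => // i j _ tP /lt0r_neq0 /supp.
by rewrite inE tP => /andP[_ /eqP].
Qed.

Definition moved_flow (t : 'I_m * 'I_n * 'I_n) : 'I_m -> 'I_n -> R :=
  let: (i, u, v) := t in
  if (u \in side_nbrs i) && (v \in side_nbrs i)
  then move_mass uniform_flow i (uniform_flow i v) u v else uniform_flow.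

Lemma moved_flowP t : flow E (moved_flow t) /\ side_supported (moved_flow t).
Proof.
case: t => [[i u v]] /=; case: ifP => [/andP[ui vi] | _]; last first.
  by split; [exact: flow_uniform_flow | exact: uniform_flow_supported].
split.
  apply: flow_move_mass; [exact: flow_uniform_flow | exact: side_nbrs_edge ui |
                         exact: side_nbrs_edge vi |].
  by rewrite lexx andbT divr_ge0 ?ler0n.
move=> a b; rewrite /move_mass /transfer /unitv /=.
have [-> | _] := eqVneq a i; last by rewrite !mul0r addr0; exact: uniform_flow_supported.
have [-> // | _] := eqVneq b u; have [-> // | _] := eqVneq b v.
by rewrite subrr mulr0 addr0; exact: uniform_flow_supported.
Qed.

Lemma outflow_moved_flow i u v : u \in side_nbrs i -> v \in side_nbrs i ->
  outflow y (moved_flow (i, u, v)) =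
  transfer (outflow y uniform_flow) ((y i)%:R * uniform_flow i v) u v.
Proof. by move=> ui vi; rewrite /= ui vi outflow_move_mass. Qed.

Hypothesis connP : connected_on E P (fun i => (0 < y i)%N && touches E P i).
Hypothesis connC : connected_on E (~: P) (fun i => (0 < y i)%N && ~~ touches E P i).

(* The moved flows displace the outflow along every [e_u - e_v] with [u], [v] in a common
   side neighbourhood; by connectivity these directions span the orthogonal of both normals. *)
Lemma span_face_normals (w : 'I_n -> R) :
  (forall t, dotp w (outflow y (moved_flow t)) = dotp w (outflow y uniform_flow)) ->
  forall l, w l = w k * indicator P l + w k0 * indicator (~: P) l.
Proof.
move=> w_const.
have w_star i u v : (0 < y i)%N -> u \in side_nbrs i -> v \in side_nbrs i -> w u = w v.
  move=> yi ui vi; have /eqP := w_const (i, u, v).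
  rewrite outflow_moved_flow // dotp_transfer -subr_eq0 addrAC subrr add0r.
  rewrite mulf_eq0 [_ * _ == 0]mulf_eq0 (gt_eqF (uniform_flow_pos vi)) pnatr_eq0 eqn0Ngt yi.
  by rewrite subr_eq0 => /eqP.
have onP := connected_on_const kP connP (w := w).
have k0C : k0 \in ~: P by rewrite inE.
have onC := connected_on_const k0C connC (w := w).
move=> l; rewrite /indicator inE; case: (boolP (l \in P)) => lP /=.
  rewrite mulr1 mulr0 addr0; apply: onP => // i u v /andP[yi tP] uP vP Eiu Eiv.
  by apply: (w_star i); rewrite // inE ?uP ?vP ?tP ?Eiu ?Eiv.
rewrite mulr0 mulr1 add0r; apply: onC; rewrite ?inE // => i u v /andP[yi ntP].
rewrite !inE => uP vP Eiu Eiv.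
by apply: (w_star i); rewrite // inE ?Eiu ?Eiv (negbTE ntP) ?(negbTE uP) ?(negbTE vP).
Qed.

Lemma face_affdim_ge : affdim_ge face n.-2.
Proof.
pose T := ('I_m * 'I_n * 'I_n)%type.
pose x0 := outflow y uniform_flow.
pose X (r : 'I_#|{: T}|) := outflow y (moved_flow (enum_val r)).
have face_x0 : face x0.
  by apply: face_outflow; [exact: flow_uniform_flow | exact: uniform_flow_supported].
have faceX r : face (X r).
  by have [fl supp] := moved_flowP (enum_val r); exact: face_outflow fl supp.
apply: (affdim_ge_rank face_x0 faceX); apply/eqP; rewrite eqn_leq -subn2 face_rank_le //=.
rewrite -{1}rank_face_normals; apply: mxrank_ge_kernel => w wM.
have w_const t : dotp (w ord0) (outflow y (moved_flow t)) = dotp (w ord0) x0.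
  apply/eqP; rewrite -subr_eq0 -dotpB; apply/eqP.
  move/matrixP/(_ ord0 (enum_rank t)): wM; rewrite !mxE => <-.
  by apply: eq_bigr => l _; rewrite !mxE /X enum_rankK.
have -> : w = (\row_c (if c == ord0 then w ord0 k else w ord0 k0)) *m face_normals.
  apply/rowP => l; rewrite !mxE big_ord_recl big_ord1 !mxE /=.
  exact: (span_face_normals (w := w ord0) w_const).
exact: submxMl.
Qed.

Lemma facet_indicator : facet_ineq (PG E y) (indicator P) (capacity E y P).
Proof.
split; first by exists k, k0; rewrite /indicator kP (negbTE k0P) oner_neq0.
split=> [|]; first exact: PG_indicator_le.
split=> [|[x0 [X [Fx0 [FX rankX]]]]]; first exact: face_affdim_ge.
by have := face_rank_le Fx0 FX; rewrite rankX subn2 ltnn.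
Qed.

End Facet.

Arguments indicator {R n} S j.

Section Backward.
Variables (R : realType) (m n : nat) (E : 'I_m -> 'I_n -> bool) (y : 'I_m -> nat).

(* if [S] respected all rows, every point of [P_G] would be tight on [S], which
   the transfers around an interior point violate *)
Lemma connected_of_interior z : interiorH (sumy R y) (PG E y) z ->
  connected_on E setT (fun i => (0 < y i)%N).
Proof.
move=> zint S resp.
case: (boolP [forall j, j \in S]) => [/forallP all_in | ]; first by left.
case: (boolP [forall j, j \notin S]) => [/forallP none | ]; first by right.
move=> /forallPn[u]; rewrite negbK => uS /forallPn[v vS]; exfalso.
have tight (x : 'I_n -> R) : PG E y x -> \sum_(j in S) x j = capacity E y S.
  move=> [d [fd xE]]; rewrite (eq_bigr _ (fun j _ => xE j)).
  apply: sum_outflow_closed => // i j yi tS dij.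
  have Eij : E i j by apply: (flow_edge fd); rewrite gt_eqF.
  case: (resp i yi) => [all_in | none]; first exact: all_in.
  by move: tS => /touchesP[j0 j0S Ej0]; have := none j0 (in_setT _) Ej0; rewrite j0S.
have [t t0 zt] := interiorH_transfer zint.
have := tight _ (zt u v); rewrite sum_transfer_in (tight _ (interiorH_mem zint)) uS (negbTE vS).
by move/eqP; rewrite addrC -subr_eq0 addrK subr0 mulr1 gt_eqF.
Qed.

Lemma indicator_not_separates (P : {set 'I_n}) k k0 (c : R) z :
  val k0 = 0%N -> k \in P -> k0 \notin P -> 0 < c -> interiorH (sumy R y) (PG E y) z ->
  ~ separates (infty1 (sumy R y) c) (interiorH (sumy R y) (PG E y))
      (indicator P) (capacity E y P).
Proof.
move=> k00 kP k0P c0 zint.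
have infty_neg : dotp (indicator P) (infty1 (sumy R y) c) < 0.
  rewrite dotp_indicator (eq_bigr (fun=> - c)) => [|j jP]; last first.
    rewrite /infty1 ifF //; apply: contraNF k0P => /eqP j0.
    by have <- : j = k0 by apply: val_inj; rewrite /= j0 k00.
  by rewrite sumr_const mulNrn oppr_lt0 pmulrn_lgt0 // card_gt0; apply/set0Pn; exists k.
move=> [[capP _] | [_ zP]]; first by have := capacity_ge0 R E y P; lra.
by have := zP z zint; have := PG_indicator_le P (interiorH_mem zint); lra.
Qed.

Lemma closed_cut_unreached (d : 'I_m -> 'I_n -> R) k k0 : ~ residual_reach E y d k k0 ->
  closed_cut E y d k k0 [set j | `[< residual_reach E y d k j >]].
Proof.
move=> nreach; split; rewrite ?inE; [exact/asboolP/residual_reach_refl | exact/asboolP |].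
move=> i j yi /touchesP[j0]; rewrite inE => /asboolP reach_j0 Eij0 dij; rewrite inE.
exact/asboolP/(residual_reach_step reach_j0 Eij0 yi dij).
Qed.

(* tightness on [T] makes [t] the integer [capacity T - sum_T p] *)
Lemma closed_cut_transfer_int (p : 'I_n -> int) k k0 (t : R) d T :
  flow E d -> outflow y d = transfer (fun j => (p j)%:~R + unitv k0 j) t k k0 ->
  closed_cut E y d k k0 T -> 0 <= t < 1 -> t = 0.
Proof.
move=> fd dE [kT k0T closedT] /andP[t0 t1].
have := sum_outflow_closed fd closedT.
rewrite dE sum_transfer_in kT (negbTE k0T) subr0 mulr1.
rewrite big_split /= sum_unitv_in (negbTE k0T) addr0 -(big_morph _ (intrD _) (mulr0z 1)).
have -> : capacity E y T = (\sum_i (y i * touches E T i))%N%:R :> R.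
  by rewrite /capacity natr_sum; apply: eq_bigr => i _; rewrite natrM.
move/(canRL (addKr _)); rewrite -mulrz_nat -intrN -intrD => tE.
move: t0 t1; rewrite tE ler0z ltrz1; set e := (- _ + _)%R => e_ge0 e_lt1.
by have -> : e = 0 by lia.
Qed.

Hypothesis niso : no_isolated E.
Variables (c : R) (k0 : 'I_n) (z : 'I_n -> R).
Hypotheses (c0 : 0 < c) (k00 : val k0 = 0%N) (zint : interiorH (sumy R y) (PG E y) z).

Lemma closed_cut_not_good (q : 'I_n -> R) d k T :
  flow E d -> outflow y d = q -> closed_cut E y d k k0 T ->
  ~ good_point (sumy R y) (PG E y) (infty1 (sumy R y) c) q.
Proof.
move=> fd qE cutT [_ no_positive].
have [P [kP k0P closedP connP connC]] := exists_facet_set fd (connected_of_interior zint) cutT.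
apply: no_positive; exists (indicator P), (capacity E y P); split; first split.
- exact: (facet_indicator _ kP k0P niso connP connC).
- exact: (indicator_not_separates k00 kP k0P c0 zint).
- by rewrite dotp_indicator -qE; exact: sum_outflow_closed.
Qed.

Lemma vertices_of_good_point (p : 'I_n -> int) :
  good_point (sumy R y) (PG E y) (infty1 (sumy R y) c) (fun j => (p j)%:~R + unitv k0 j) ->
  forall k, PG E y (fun j => (p j)%:~R + unitv k j : R).
Proof.
set q := fun j => _ + unitv k0 j => good k; have [qPG _] := good.
have [-> // | kk0] := eqVneq k k0.
have [t [/andP[t0 t1] tPG tmax]] := max_transfer kk0 qPG.
have [t1E | t_neq1] := eqVneq t 1.
  suff -> : (fun j => (p j)%:~R + unitv k j) = transfer q t k k0 by [].
  by apply/funext => j; rewrite t1E /transfer /q; ring.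
have {t1 t_neq1} t1 : t < 1 by rewrite lt_neqAle t_neq1.
have [d [fd dE]] := tPG.
have {}dE : outflow y d = transfer q t k k0 by apply/funext => j; rewrite dE.
case: (pselect (residual_reach E y d k k0)) => [reach | nreach].
  have [C [eps [_ eps0 aug]]] := augment fd reach.
  pose delta := Num.min eps (1 - t).
  have delta_gt0 : 0 < delta by rewrite lt_min eps0 subr_gt0.
  have [|d' [fd' _] d'E] := aug delta; first by rewrite (ltW delta_gt0) ge_min lexx.
  case: (tmax (t + delta)); first by rewrite ltrDl delta_gt0 -lerBrDl ge_min lexx orbT.
  by exists d'; split=> // j; rewrite -transfer_add -dE -d'E.
have cutT := closed_cut_unreached nreach.
have t0E := closed_cut_transfer_int fd dE cutT (introT andP (conj t0 t1)).
by case: (closed_cut_not_good fd _ cutT good); rewrite dE t0E transfer0.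
Qed.

End Backward.

Unset Implicit Arguments.

Theorem mainTheorem4 (R : realType) (m n : nat)
    (E : 'I_m -> 'I_n -> bool) (y : 'I_m -> nat) :
  (0 < m)%N -> (0 < n)%N -> no_isolated E ->
  (exists z : 'I_n -> R, interiorH (sumy R y) (PG E y) z) ->
  exists C : R, 0 < C /\
    forall c : R, C <= c ->
    forall p : 'I_n -> int,
      PGminus E y (fun k => (p k)%:~R : R) <->
      good_point (sumy R y) (PG E y) (infty1 (sumy R y) c)
        (fun k => (p k)%:~R + (if val k == 0%N then 1 else 0)).
Proof.
move=> _ n_gt0 niso [z zint]; exists 1; split=> [|c c_ge1 p]; first exact: ltr01.
have c0 : 0 < c := lt_le_trans ltr01 c_ge1.
pose k0 : 'I_n := Ordinal n_gt0; have k00 : val k0 = 0%N by [].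
rewrite (add_unitv_ord0E _ k00) PGminus_vertices; split.
  by apply: good_point_of_vertices => // x; exact: PG_inH_ge0.
exact: (vertices_of_good_point niso c0 k00 zint).
Qed.
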